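(* Let $W$ be the group of a reflection lattice, with a chosen set $\{r_i\}_{i\in I}$ of simple reflections. Let $\mathbf{i}=i_1i_2\cdots i_m$ be a minimal word, $\sigma\in W$ a reflection, and $n$ the number of times $\sigma$ appears in the sequence of reflections associated to $\mathbf{i}$. Suppose that $\sigma$ is a simple reflection, that $r(\mathbf{i})$ is a reflection which commutes with $\sigma$, and that $r(\mathbf{i})\neq\sigma$. Then $n=0$.
   Context: A reflection lattice is a free abelian group $L$ of finite rank with a finite subgroup $W\subset\mathrm{Aut}(L)$ generated by the reflections (automorphisms conjugate in $GL(r,\mathbb{Q})$ to $\mathrm{diag}(-1,1,\dots,1)$) it contains; $W$ is a finite Weyl group and a set of simple reflections $\{r_i\}_{i\in I}$ is a Coxeter generating set of reflections in the walls of a chamber. Let $\mathbf{I}$ be the free group on $I$ and $r:\mathbf{I}\to W$ the homomorphism with $r(i)=r_i$. A word is positive if it is a product of elements of $I$; its length is the number of factors. A positive word $\mathbf{i}$ is minimal if no positive word of smaller length has the same image under $r$. For a positive word $\mathbf{i}=i_1\cdots i_m$, the associated sequence of reflections is $\sigma_1,\dots,\sigma_m$ with $\sigma_k=r(i_1\cdots i_{k-1})\,r_{i_k}\,r(i_1\cdots i_{k-1})^{-1}$. *)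

From mathcomp Require Import all_boot all_order all_algebra.
Set Implicit Arguments. Unset Strict Implicit. Unset Printing Implicit Defensive.
Import Order.TTheory GRing.Theory Num.Theory.
Local Open Scope ring_scope.

(* The lattice L is Z^n (column vectors); Aut(L) = GL(n,Z) = invertible
   integer n x n matrices acting by left multiplication.
   L (x) Q = 'cV[rat]_n. *)

Definition ratmx (n : nat) (A : 'M[int]_n) : 'M[rat]_n := map_mx intr A.

Definition diag_refl (n : nat) : 'M[rat]_n :=
  diag_mx (\row_(i < n) (if nat_of_ord i == 0%N then -1 else 1)).

Definition is_reflection (n : nat) (s : 'M[int]_n) : Prop :=
  exists P : 'M[rat]_n, P \in unitmx /\ ratmx s = invmx P *m diag_refl n *m P.

Definition reflection_lattice_group (n : nat) (W : seq 'M[int]_n) : Prop :=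
  [/\ 1%:M \in W,
      (forall A B, A \in W -> B \in W -> A *m B \in W),
      (forall A, A \in W -> A \in unitmx /\ invmx A \in W) &
      (forall A, A \in W -> exists rs : seq 'M[int]_n,
          (forall s, s \in rs -> s \in W /\ is_reflection s) /\
          A = foldr mulmx 1%:M rs)].

Definition fixes (n : nat) (s : 'M[int]_n) (x : 'cV[rat]_n) : Prop :=
  ratmx s *m x = x.

(* v lies in a chamber: it is on no reflecting hyperplane of W *)
Definition generic (n : nat) (W : seq 'M[int]_n) (v : 'cV[rat]_n) : Prop :=
  forall t, t \in W -> is_reflection t -> ~ fixes t v.

(* The reflecting hyperplane of s is a wall of the chamber containing v:
   there is a point x of H_s lying on no other reflecting hyperplane and such
   that the half-open segment [v, x) meets no reflecting hyperplane
   (i.e. x is in the relative interior of a facet of the closed chamber). *)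
Definition wall (n : nat) (W : seq 'M[int]_n) (v : 'cV[rat]_n)
  (s : 'M[int]_n) : Prop :=
  exists x : 'cV[rat]_n,
    [/\ fixes s x,
        (forall t, t \in W -> is_reflection t -> fixes t x ->
           forall y, fixes t y <-> fixes s y) &
        (forall lam : rat, 0 <= lam -> lam < 1 ->
           forall t, t \in W -> is_reflection t ->
             ~ fixes t (v + lam *: (x - v)))].

(* {r_i}_{i in I} is the (injectively indexed) set of simple reflections:
   the reflections of W in the walls of some chamber. *)
Definition simple_reflections (n : nat) (W : seq 'M[int]_n) (I : finType)
  (r : I -> 'M[int]_n) : Prop :=
  injective r /\
  exists v : 'cV[rat]_n, generic W v /\
    forall s, (s \in W /\ is_reflection s /\ wall W v s) <-> exists i, s = r i.

Definition rword (n : nat) (I : Type) (r : I -> 'M[int]_n) (w : seq I)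
  : 'M[int]_n := foldr (fun i A => r i *m A) 1%:M w.

Definition minimal_word (n : nat) (I : Type) (r : I -> 'M[int]_n) (w : seq I)
  : Prop :=
  forall w' : seq I, (size w' < size w)%N -> rword r w' <> rword r w.

(* sequence of reflections sigma_k = P_k r_{i_k} P_k^{-1},
   P_k = r(i_1 ... i_{k-1}); P is the accumulated prefix product. *)
Fixpoint refl_seq_aux (n : nat) (I : Type) (r : I -> 'M[int]_n)
  (P : 'M[int]_n) (w : seq I) : seq 'M[int]_n :=
  match w with
  | [::] => [::]
  | i :: w' => (P *m r i *m invmx P) :: refl_seq_aux r (P *m r i) w'
  end.

Definition refl_seq (n : nat) (I : Type) (r : I -> 'M[int]_n) (w : seq I)
  : seq 'M[int]_n := refl_seq_aux r 1%:M w.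

(* Write [sigma y = y - 2 b(y) a] with [b(a) = 1] and let [v] lie in the
   chamber whose walls are the hyperplanes of the [r_i].  Along the gallery
   [v, r_{i_1} v, r_{i_1} r_{i_2} v, ...] the linear form [b] changes sign
   exactly at the steps [k] with [sigma_k = sigma]: the [k]-th step passes
   through a point of a wall, and a reflection of the finite group [W] is
   determined by its hyperplane.  Hence [(-1)^n] is the sign of
   [b(v) b(r(i) v)].  A reflection commuting with [sigma] and different from
   it preserves [b], so [n] is even; and if [sigma] occurred twice, deleting
   the two corresponding letters would give a shorter word with the same
   image, so [n <= 1]. *)

From mathcomp Require Import all_boot all_order all_algebra.
From mathcomp Require Import ring lra.
Set Implicit Arguments. Unset Strict Implicit. Unset Printing Implicit Defensive.
Import Order.TTheory GRing.Theory Num.Theory.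
Local Open Scope ring_scope.

Section ReflectionAlgebra.

Variables (F : realFieldType) (n : nat).
Implicit Types (S T : 'M[F]_n) (a c y : 'cV[F]_n) (b : 'rV[F]_n).

Definition pairing b y : F := (b *m y) 0 0.

Lemma pairingD b y1 y2 : pairing b (y1 + y2) = pairing b y1 + pairing b y2.
Proof. by rewrite /pairing mulmxDr mxE. Qed.

Lemma pairingZ b (k : F) y : pairing b (k *: y) = k * pairing b y.
Proof. by rewrite /pairing -scalemxAr mxE. Qed.

Lemma pairingN b y : pairing b (- y) = - pairing b y.
Proof. by rewrite /pairing mulmxN mxE. Qed.

Lemma pairingB b y1 y2 : pairing b (y1 - y2) = pairing b y1 - pairing b y2.
Proof. by rewrite pairingD pairingN. Qed.

Lemma mul_pairing a b y : a *m (b *m y) = pairing b y *: a.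
Proof. by rewrite {1}[b *m y]mx11_scalar mul_mx_scalar. Qed.

Lemma pairing_sub_proj a b y :
  pairing b a = 1 -> pairing b (y - pairing b y *: a) = 0.
Proof. by move=> ba1; rewrite pairingB pairingZ ba1 mulr1 subrr. Qed.

Lemma colvec_mxP S T : (forall y, S *m y = T *m y) -> S = T.
Proof.
by move=> ST; apply/trmx_inj/eqP/mulmxP => u; rewrite -[u]trmxK -!trmx_mul ST.
Qed.

Lemma mx_eq_on_ker_root S T a b : pairing b a = 1 -> S *m a = T *m a ->
  (forall h, pairing b h = 0 -> S *m h = T *m h) -> S = T.
Proof.
move=> ba1 STa STker; apply: colvec_mxP => y.
have ker_y := pairing_sub_proj y ba1.
set k := pairing b y in ker_y *.
have -> : y = (y - k *: a) + k *: a by rewrite subrK.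
by rewrite !(mulmxDr _ (y - k *: a)) -!scalemxAr STa STker.
Qed.

Lemma pairing_mx_segment b (M : 'M[F]_n) y1 y2 (l : F) :
  pairing b (M *m (y1 + l *: (y2 - y1))) =
  pairing b (M *m y1) + l * (pairing b (M *m y2) - pairing b (M *m y1)).
Proof. by rewrite mulmxDr -scalemxAr mulmxBr pairingD pairingZ pairingB. Qed.

Lemma transvection_iter (U : 'M[F]_n) b h : pairing b h = 0 ->
  (forall y, U *m y = y + pairing b y *: h) ->
  forall k y, iter k (mulmx U) 1%:M *m y = y + (k%:R * pairing b y) *: h.
Proof.
move=> bh0 Uy; elim=> [|k IH] y; first by rewrite mul1mx mul0r scale0r addr0.
rewrite iterS -mulmxA IH mulmxDr Uy -scalemxAr Uy bh0 scale0r addr0.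
by rewrite -addrA -scalerDl mulrSr mulrDl mul1r [_ + pairing b y]addrC.
Qed.

Definition refl_root S a b :=
  (forall y, S *m y = y - (2 * pairing b y) *: a) /\ pairing b a = 1.

Section OneReflection.

Variables (S : 'M[F]_n) (a : 'cV[F]_n) (b : 'rV[F]_n).
Hypothesis Sab : refl_root S a b.

Lemma refl_root_fixE y : S *m y = y <-> pairing b y = 0.
Proof.
case: Sab => -> ba1; split => [|->]; last by rewrite mulr0 scale0r subr0.
by move/(congr1 (pairing b)); rewrite pairingB pairingZ ba1; lra.
Qed.

Lemma refl_root_root : S *m a = - a.
Proof.
by case: Sab => -> ->; rewrite mulr1 scaler_nat mulr2n opprD addrA subrr sub0r.
Qed.

Lemma pairing_refl_root y : pairing b (S *m y) = - pairing b y.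
Proof. case: Sab => -> ba1; rewrite pairingB pairingZ ba1; ring. Qed.

Lemma refl_rootK y : S *m (S *m y) = y.
Proof.
by rewrite {1}Sab.1 pairing_refl_root Sab.1 mulrN scaleNr opprK subrK.
Qed.

End OneReflection.

Lemma refl_root_coroot_of_fix S T a b a' b' : refl_root S a b -> refl_root T a' b' ->
  (forall y, S *m y = y -> T *m y = y) -> exists c, refl_root T c b.
Proof.
move=> Sab Tab' fixST.
have b'E y : pairing b' y = pairing b y * pairing b' a.
  have /(refl_root_fixE Sab)/fixST/(refl_root_fixE Tab') := pairing_sub_proj y Sab.2.
  by rewrite pairingB pairingZ => /subr0_eq.
exists (pairing b' a *: a'); split => [y|]; first by rewrite Tab'.1 b'E scalerA mulrA.
by rewrite pairingZ mulrC -b'E Tab'.2.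
Qed.

Section Commuting.

Variables (S T : 'M[F]_n) (a : 'cV[F]_n) (b : 'rV[F]_n).
Hypotheses (Sab : refl_root S a b) (TS : T *m S = S *m T).

Lemma commute_refl_root_root : T *m a = pairing b (T *m a) *: a.
Proof.
set mu := pairing b (T *m a).
have : S *m (T *m a) = - (T *m a).
  by rewrite mulmxA -TS -mulmxA (refl_root_root Sab) mulmxN.
rewrite Sab.1 -/mu => STa.
have Ta2 : T *m a + T *m a = (2 * mu) *: a.
  by apply/eqP; rewrite -subr_eq0 -addrA STa addrN.
apply: (@scalerI _ _ 2); first by rewrite pnatr_eq0.
by rewrite scalerA -Ta2 scaler_nat mulr2n.
Qed.

Lemma commute_refl_root_ker h : pairing b h = 0 -> pairing b (T *m h) = 0.
Proof.
move/(refl_root_fixE Sab) => Sh; apply/(refl_root_fixE Sab).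
by rewrite mulmxA -TS -mulmxA Sh.
Qed.

Lemma commute_refl_root_pairing y :
  pairing b (T *m y) = pairing b (T *m a) * pairing b y.
Proof.
set k := pairing b y.
have -> : T *m y = T *m (y - k *: a) + k *: (T *m a).
  by rewrite scalemxAr -mulmxDr subrK.
rewrite pairingD pairingZ commute_refl_root_ker ?pairing_sub_proj ?Sab.2 //.
by rewrite add0r mulrC.
Qed.

End Commuting.

Lemma commute_refl_root_pairing_id S T a b a' b' :
  refl_root S a b -> refl_root T a' b' -> T *m S = S *m T -> T <> S ->
  forall y, pairing b (T *m y) = pairing b y.
Proof.
move=> Sab Tab' TS T_neq_S y.
have Tpairing := commute_refl_root_pairing Sab TS.
set mu := pairing b (T *m a) in Tpairing *.
have mu2 : mu * mu = 1.
  by rewrite -[RHS]Sab.2 -[in RHS](refl_rootK Tab' a) !Tpairing Sab.2 mulr1.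
have [mu1 | muN1] : mu = 1 \/ mu = -1.
  have /eqP : (mu - 1) * (mu + 1) = 0 by rewrite mulrDr !mulrBl mu2; ring.
  by rewrite mulf_eq0 => /orP [/eqP ? | /eqP ?]; [left | right]; lra.
  by rewrite Tpairing mu1 mul1r.
exfalso; apply: T_neq_S; apply: (mx_eq_on_ker_root Sab.2).
  by rewrite (commute_refl_root_root Sab TS) -/mu muN1 scaleN1r (refl_root_root Sab).
move=> h bh0; rewrite (proj2 (refl_root_fixE Sab h) bh0); apply/(refl_root_fixE Tab').
have := muN1; rewrite /mu Tab'.1 pairingB pairingZ Sab.2 => b'a.
have := commute_refl_root_ker Sab TS bh0; rewrite Tab'.1 pairingB pairingZ bh0 => b'h.
have b'a_ba' : pairing b' a * pairing b a' = 1 by lra.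
have b'h_ba' : pairing b' h * pairing b a' = 0 by lra.
by rewrite -[pairing b' h]mulr1 -b'a_ba' mulrCA b'h_ba' mulr0.
Qed.

End ReflectionAlgebra.

Lemma sign_segment (R : realFieldType) (c0 c1 : R) : c1 != 0 ->
  (forall l, 0 <= l -> l < 1 -> c0 + l * (c1 - c0) != 0) -> 0 < c0 * c1.
Proof.
wlog c0_gt0 : c0 c1 / 0 < c0 => [hwlog c1_neq0 no_root|c1_neq0 no_root].
  case: (ltrgt0P c0) => [c0_gt0 | c0_lt0 | c0_0]; first exact: hwlog.
  - rewrite -mulrNN; apply: hwlog; rewrite ?oppr_gt0 ?oppr_eq0 // => l l_ge0 l_lt1.
    have -> : - c0 + l * (- c1 - - c0) = - (c0 + l * (c1 - c0)) by ring.
    by rewrite oppr_eq0 no_root.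
  - by have := no_root 0 (lexx _) ltr01; rewrite c0_0 mul0r addr0 eqxx.
rewrite pmulr_rgt0 // lt_def c1_neq0 /= leNgt; apply/negP => c1_lt0.
have d_gt0 : 0 < c0 - c1 by lra.
have l_ge0 : 0 <= c0 / (c0 - c1) by rewrite divr_ge0 // ltW.
have l_lt1 : c0 / (c0 - c1) < 1 by rewrite ltr_pdivrMr // mul1r; lra.
move: (no_root _ l_ge0 l_lt1) => /eqP; apply.
by field; rewrite gt_eqF.
Qed.

Lemma mulr_gt0_sign_trans (R : realFieldType) (x y z : R) :
  0 < x * y -> 0 < y * z -> 0 < x * z.
Proof.
move=> xy yz; case: (ltrgt0P y) => [y_gt0 | y_lt0 | y0]; [nra | nra |].
by move: xy; rewrite y0 mulr0 ltxx.
Qed.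

Lemma invmx_eq_left (R : comUnitRingType) n (A B : 'M[R]_n) :
  B *m A = 1%:M -> invmx A = B.
Proof. by move=> BA; rewrite -[LHS]mul1mx -BA mulmxK // (mulmx1_unit BA).2. Qed.

Section RatMatrices.

Variable n : nat.
Implicit Types (A B G s t : 'M[int]_n).

Lemma ratmxM A B : ratmx (A *m B) = ratmx A *m ratmx B.
Proof. exact: map_mxM. Qed.

Lemma ratmx1 : ratmx (1%:M : 'M[int]_n) = 1%:M.
Proof. exact: map_mx1. Qed.

Lemma ratmx_inj : injective (@ratmx n).
Proof.
move=> A B /matrixP AB; apply/matrixP => i j.
by have := AB i j; rewrite !mxE => /intr_inj.
Qed.

Lemma ratmx_invmx G : G \in unitmx -> ratmx (invmx G) = invmx (ratmx G).
Proof. by move=> Gu; apply/esym/invmx_eq_left; rewrite -ratmxM mulVmx // ratmx1. Qed.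

Lemma ratmx_unit G : G \in unitmx -> ratmx G \in unitmx.
Proof.
move=> Gu; have /mulmx1_unit[] // : ratmx G *m ratmx (invmx G) = 1%:M.
by rewrite -ratmxM mulmxV // ratmx1.
Qed.

Lemma fixes_conj G s x : G \in unitmx ->
  fixes (invmx G *m s *m G) x <-> fixes s (ratmx G *m x).
Proof.
move=> Gu; have RGu := ratmx_unit Gu.
rewrite /fixes !ratmxM ratmx_invmx // -!mulmxA.
by split => [/(congr1 (mulmx (ratmx G))) | ->]; rewrite ?mulKVmx ?mulKmx.
Qed.

Lemma is_reflection_conj G t : G \in unitmx -> is_reflection t ->
  is_reflection (invmx G *m t *m G).
Proof.
move=> Gu [P [Pu tE]]; have RGu := ratmx_unit Gu.
exists (P *m ratmx G); split; first by rewrite unitmx_mul Pu.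
have -> : invmx (P *m ratmx G) = invmx (ratmx G) *m invmx P.
  by apply: invmx_eq_left; rewrite mulmxA -(mulmxA _ _ P) mulVmx // mulmx1 mulVmx.
by rewrite !ratmxM ratmx_invmx // tE !mulmxA.
Qed.

Lemma diag_reflE (i0 : 'I_n) : val i0 = 0%N ->
  diag_refl n = 1%:M - 2 *: delta_mx i0 i0.
Proof.
move=> i00; apply/matrixP => i j; rewrite !mxE.
have eq_i0 k : (k == i0) = (val k == 0%N) by rewrite -val_eqE i00.
rewrite !eq_i0; case: (eqVneq i j) => [<- | ij] /=.
  by case: (val i == 0%N); rewrite /= ?mulr1n; ring.
rewrite mulr0n; case: (val i =P 0%N) => i0'; case: (val j =P 0%N) => j0 /=; try ring.
by case/eqP: ij; apply: val_inj; rewrite /= i0' j0.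
Qed.

Lemma is_reflection_refl_root t : (0 < n)%N -> is_reflection t ->
  exists a b, refl_root (ratmx t) a b.
Proof.
move=> n_gt0 [P [Pu tE]]; set i0 := Ordinal n_gt0.
exists (invmx P *m delta_mx i0 0), (delta_mx 0 i0 *m P); split => [y|].
  rewrite tE (diag_reflE (i0 := i0)) // -(mul_delta_mx (0 : 'I_1)).
  rewrite mulmxBr mulmx1 mulmxBl mulVmx // mulmxBl mul1mx; congr (_ - _).
  rewrite -!mulmxA -scalemxAl -scalemxAr -!mulmxA mul_pairing -scalemxAr scalerA.
  by rewrite /pairing !mulmxA.
rewrite /pairing !mulmxA -[delta_mx 0 i0 *m P *m invmx P]mulmxA mulmxV // mulmx1.
by rewrite mul_delta_mx mxE.
Qed.

Lemma reflection_invol t : (0 < n)%N -> is_reflection t -> t *m t = 1%:M.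
Proof.
move=> n_gt0 /(is_reflection_refl_root n_gt0) [a [b tab]].
apply: ratmx_inj; rewrite ratmxM ratmx1; apply: colvec_mxP => y.
by rewrite -mulmxA (refl_rootK tab) mul1mx.
Qed.

End RatMatrices.

Lemma seq_pigeonhole (T : eqType) (s : seq T) (f : nat -> T) :
  (forall k, f k \in s) -> exists i j, (i < j)%N /\ f i = f j.
Proof.
move=> f_in; set fs := map f (iota 0 (size s).+1).
have /(uniqPn (f 0%N)) [i [j [ij j_lt]]] : ~~ uniq fs.
  apply/negP => /uniq_leq_size /(_ _) le_fs.
  have /le_fs : {subset fs <= s} by move=> _ /mapP [k _ ->].
  by rewrite size_map size_iota ltnn.
rewrite size_map size_iota in j_lt.
rewrite !(nth_map 0%N) ?size_iota ?(ltn_trans ij) // !nth_iota ?(ltn_trans ij) //.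
by rewrite !add0n; exists i, j.
Qed.

Lemma rword_cons n (I : Type) (r : I -> 'M[int]_n) i w :
  rword r (i :: w) = r i *m rword r w.
Proof. by []. Qed.

Section ReflectionGroup.

Variables (n : nat) (W : seq 'M[int]_n).
Hypotheses (W1 : 1%:M \in W)
  (WM : forall A B, A \in W -> B \in W -> A *m B \in W)
  (WV : forall A, A \in W -> A \in unitmx /\ invmx A \in W).

Lemma conj_mem G s : G \in W -> s \in W -> invmx G *m s *m G \in W.
Proof. by move=> GW sW; have [_ GiW] := WV GW; apply: WM (WM GiW sW) GW. Qed.

Lemma generic_pairing_neq0 s a b G y : s \in W -> is_reflection s ->
  refl_root (ratmx s) a b -> G \in W -> generic W y -> pairing b (ratmx G *m y) != 0.
Proof.
move=> sW s_refl sab GW y_gen; apply/eqP => /(refl_root_fixE sab) sGy.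
have [Gu _] := WV GW.
apply: (y_gen (invmx G *m s *m G)); first exact: conj_mem.
  exact: is_reflection_conj.
exact/fixes_conj.
Qed.

(* [tau s] is a transvection [y |-> y + b(y) h]; having finite order forces [h = 0]. *)
Lemma reflection_eq_of_coroot s tau a c b : s \in W -> tau \in W ->
  refl_root (ratmx s) a b -> refl_root (ratmx tau) c b -> tau = s.
Proof.
move=> sW tauW sab taucb; set u := tau *m s; set h := 2 *: (c - a).
have bh0 : pairing b h = 0 by rewrite pairingZ pairingB sab.2 taucb.2 subrr mulr0.
have uy y : ratmx u *m y = y + pairing b y *: h.
  rewrite ratmxM -mulmxA taucb.1 (pairing_refl_root sab) sab.1 /h scalerA.
  by rewrite scalerBr mulrN scaleNr opprK [_ * 2]mulrC addrAC addrA.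
have u_in k : iter k (mulmx u) 1%:M \in W.
  by elim: k => //= k IH; apply: WM (WM tauW sW) IH.
have ratmx_iter k : ratmx (iter k (mulmx u) 1%:M) = iter k (mulmx (ratmx u)) 1%:M.
  by elim: k => [|k IH]; rewrite ?ratmx1 //= ratmxM IH.
have [i [j [ij uij]]] := seq_pigeonhole u_in.
have h0 : h = 0.
  move: (congr1 (fun A => ratmx A *m a) uij) => /=.
  rewrite !ratmx_iter !(transvection_iter bh0 uy) sab.2 => /addrI /eqP.
  rewrite -subr_eq0 -scalerBl scaler_eq0 !mulr1 subr_eq0 eqr_nat.
  case/orP => [/eqP ij' | /eqP //].
  by rewrite ij' ltnn in ij.
have ca : c = a.
  by apply/eqP; rewrite -subr_eq0; move/eqP: h0; rewrite scaler_eq0 pnatr_eq0.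
by apply: ratmx_inj; apply: colvec_mxP => y; rewrite taucb.1 sab.1 ca.
Qed.

Hypothesis n_gt0 : (0 < n)%N.

Lemma refl_eq_of_wall_point s a b G t x : s \in W -> is_reflection s ->
  refl_root (ratmx s) a b -> G \in W -> t \in W -> is_reflection t ->
  (forall t', t' \in W -> is_reflection t' -> fixes t' x ->
     forall y, fixes t' y <-> fixes t y) ->
  fixes s (ratmx G *m x) -> G *m t *m invmx G = s.
Proof.
move=> sW s_refl sab GW tW t_refl x_only_t sGx; have [Gu GiW] := WV GW.
have conj_t := x_only_t _ (conj_mem GW sW) (is_reflection_conj Gu s_refl)
  (proj2 (fixes_conj s x Gu) sGx).
have sgE : G *m t *m invmx G = invmx (invmx G) *m t *m invmx G by rewrite invmxK.
have Giu : invmx G \in unitmx by rewrite unitmx_inv.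
have sgW : G *m t *m invmx G \in W by rewrite sgE conj_mem.
have /(is_reflection_refl_root n_gt0) [a' [b' sgab']] :
  is_reflection (G *m t *m invmx G) by rewrite sgE; apply: is_reflection_conj.
have [c sgcb] : exists c, refl_root (ratmx (G *m t *m invmx G)) c b.
  apply: (refl_root_coroot_of_fix sab sgab') => y sy.
  rewrite sgE; apply/(fixes_conj _ _ Giu)/conj_t/fixes_conj => //.
  by rewrite mulmxA -ratmxM mulmxV // ratmx1 mul1mx.
exact: reflection_eq_of_coroot sW sgW sab sgcb.
Qed.

(* Both [v] and [t v] see the wall point [x] through a segment that meets no
   reflecting hyperplane, and [b] does not vanish at [G x]. *)
Lemma wall_pairing_sign s a b G t v : s \in W -> is_reflection s ->
  refl_root (ratmx s) a b -> G \in W -> t \in W -> is_reflection t -> wall W v t ->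
  G *m t *m invmx G <> s ->
  0 < pairing b (ratmx G *m v) * pairing b (ratmx (G *m t) *m v).
Proof.
move=> sW s_refl sab GW tW t_refl [x [tx x_only_t x_seg]] sg_neq.
have Gx : pairing b (ratmx G *m x) != 0.
  apply/eqP => /(refl_root_fixE sab) sGx.
  exact/sg_neq/(refl_eq_of_wall_point sW s_refl sab GW tW t_refl x_only_t).
have side H : H \in W -> pairing b (ratmx H *m x) != 0 ->
    0 < pairing b (ratmx H *m v) * pairing b (ratmx H *m x).
  move=> HW Hx; apply: (sign_segment Hx) => l l_ge0 l_lt1.
  rewrite -pairing_mx_segment.
  exact: generic_pairing_neq0 sW s_refl sab HW (x_seg l l_ge0 l_lt1).
have Gtx : ratmx (G *m t) *m x = ratmx G *m x by rewrite ratmxM -mulmxA tx.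
have := side _ (WM GW tW); rewrite Gtx => /(_ Gx) Gtv.
by apply: mulr_gt0_sign_trans (side _ GW Gx) _; rewrite mulrC.
Qed.

Variables (I : Type) (r : I -> 'M[int]_n) (v : 'cV[rat]_n).
Hypotheses (v_generic : generic W v)
  (r_wall : forall i, [/\ r i \in W, is_reflection (r i) & wall W v (r i)]).

Lemma pairing_refl_seq_sign s a b w G : s \in W -> is_reflection s ->
  refl_root (ratmx s) a b -> G \in W ->
  0 < pairing b (ratmx G *m v) * pairing b (ratmx (G *m rword r w) *m v)
      * (-1) ^+ count_mem s (refl_seq_aux r G w).
Proof.
move=> sW s_refl sab; elim: w G => [|i w IH] G GW.
  have := generic_pairing_neq0 sW s_refl sab GW v_generic.
  by rewrite mulmx1 mulr1 -expr2 lt_def sqrf_eq0 sqr_ge0 andbT.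
have [riW ri_refl ri_wall] := r_wall i.
have := IH _ (WM GW riW); rewrite rword_cons /= mulmxA exprD.
case: eqP => [sgE | sg_neq] IHi.
  have : ratmx (G *m r i) = ratmx s *m ratmx G.
    by rewrite -sgE -ratmxM mulmxKV // (WV GW).1.
  move: IHi; rewrite expr1 => + Gi; rewrite Gi -mulmxA (pairing_refl_root sab).
  by rewrite mulN1r mulrN -!mulNr.
rewrite expr0 mul1r -mulrA.
have GGi := wall_pairing_sign sW s_refl sab GW riW ri_refl ri_wall sg_neq.
by apply: mulr_gt0_sign_trans GGi _; rewrite mulrA.
Qed.

End ReflectionGroup.

Section Deletion.

Variables (n : nat) (I : Type) (r : I -> 'M[int]_n).
Hypothesis r_invol : forall i, r i *m r i = 1%:M.

Lemma mulmx_r_unit G i : G \in unitmx -> G *m r i \in unitmx.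
Proof. by move=> Gu; rewrite unitmx_mul Gu (mulmx1_unit (r_invol i)).1. Qed.

Lemma refl_seq_aux_delete1 s w G : G \in unitmx -> s \in refl_seq_aux r G w ->
  exists w', (size w' + 1 = size w)%N /\ s *m (G *m rword r w) = G *m rword r w'.
Proof.
elim: w G => [|i w IH] G Gu //; rewrite rword_cons /= inE => /orP [/eqP -> | s_in].
  exists w; split; first by rewrite addn1.
  by rewrite !mulmxA mulmxKV // -(mulmxA G) r_invol mulmx1.
have [w' [size_w' sw']] := IH _ (mulmx_r_unit i Gu) s_in.
exists (i :: w'); split; first by rewrite /= addSn size_w'.
by move: sw'; rewrite !rword_cons !mulmxA.
Qed.

Lemma refl_seq_aux_delete2 s w G : G \in unitmx ->
  (1 < count_mem s (refl_seq_aux r G w))%N ->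
  exists w', (size w' + 2 = size w)%N /\ G *m rword r w' = G *m rword r w.
Proof.
elim: w G => [|i w IH] G Gu //; rewrite rword_cons /=; have Giu := mulmx_r_unit i Gu.
case: eqP => [sE | _] /= count_gt1; last first.
  have [w' [size_w' Gw']] := IH _ Giu count_gt1.
  exists (i :: w'); split; first by rewrite /= addSn size_w'.
  by move: Gw'; rewrite !rword_cons !mulmxA.
have /(refl_seq_aux_delete1 Giu) [w' [size_w' sw']] : s \in refl_seq_aux r (G *m r i) w.
  by rewrite -has_pred1 has_count -(ltn_add2l 1).
move: sw'; rewrite -sE !mulmxA mulmxKV // -mulmxA.
move=> /(congr1 (mulmx (invmx (G *m r i)))); rewrite !mulKmx // => rw'.
exists w'; split; first by rewrite -size_w' addn1 addn2.
by rewrite -mulmxA rw'.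
Qed.

Lemma minimal_word_count_le1 s w : minimal_word r w ->
  (count_mem s (refl_seq r w) <= 1)%N.
Proof.
move=> w_min; rewrite leqNgt; apply/negP.
move/(refl_seq_aux_delete2 (unitmx1 _ _)) => [w' [size_w' ww']].
by apply: (w_min w'); [rewrite -size_w' addn2 | rewrite !mul1mx in ww'].
Qed.

End Deletion.

Theorem proposition4p9 (n : nat) (W : seq 'M[int]_n) (I : finType)
  (r : I -> 'M[int]_n) (w : seq I) (sigma : 'M[int]_n) :
  reflection_lattice_group W ->
  simple_reflections W r ->
  minimal_word r w ->
  sigma \in W -> is_reflection sigma ->
  (exists i, sigma = r i) ->
  is_reflection (rword r w) ->
  rword r w *m sigma = sigma *m rword r w ->
  rword r w <> sigma ->
  count_mem sigma (refl_seq r w) = 0%N.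
Proof.
(* The argument does not need [sigma] to be simple. *)
move=> [W1 WM WV _] [_ [v [v_generic r_simple]]] w_min sigmaW sigma_refl _.
move=> w_refl w_comm w_neq.
have [n0 | n_gt0] := posnP n.
  by subst n; case: w_neq; rewrite [rword r w]flatmx0 [sigma]flatmx0.
have r_wall i : [/\ r i \in W, is_reflection (r i) & wall W v (r i)].
  by have [? [? ?]] := (r_simple (r i)).2 (ex_intro _ i erefl).
have r_invol i : r i *m r i = 1%:M.
  by case: (r_wall i) => _ /(reflection_invol n_gt0).
have [a [b sab]] := is_reflection_refl_root n_gt0 sigma_refl.
have [a' [b' wab']] := is_reflection_refl_root n_gt0 w_refl.
have b_w : pairing b (ratmx (rword r w) *m v) = pairing b v.
  apply: (commute_refl_root_pairing_id sab wab'); first by rewrite -!ratmxM w_comm.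
  by move/ratmx_inj.
have := pairing_refl_seq_sign W1 WM WV n_gt0 v_generic r_wall w
  sigmaW sigma_refl sab W1.
rewrite ratmx1 !mul1mx b_w.
have := minimal_word_count_le1 r_invol sigma w_min.
rewrite /refl_seq; case: (count_mem sigma _) => [|[|k]] // _.
by rewrite expr1 mulrN1 oppr_gt0 -expr2 ltNge sqr_ge0.
Qed.
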